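(* Let $d\ge1$, let $\{e^j\}_{j=1}^d$ be the standard basis of $\mathbb{R}^d$, let $\|\cdot\|_2$ be the Euclidean norm, $B_2=\{x\in\mathbb{R}^d:\|x\|_2\le1\}$, and $B^o_2(x)=\{y:\|y-x\|_2<1\}$. Define $x^j:=\frac{1}{2d}e^j$ for $j=1,\dots,d$ and $x^{d+1}:=-\frac{1}{2d}\sum_{j=1}^d e^j$. Then $$B_2\subset\bigcup_{j=1}^{d+1}B^o_2(x^j).$$ *)

From mathcomp Require Import all_boot all_order all_algebra.
From mathcomp Require Import reals.
Set Implicit Arguments. Unset Strict Implicit. Unset Printing Implicit Defensive.
Import Order.TTheory GRing.Theory Num.Theory.
Local Open Scope ring_scope.

Definition norm2 (R : realType) (d : nat) (x : 'rV[R]_d) : R :=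
  Num.sqrt (\sum_(i < d) x 0 i ^+ 2).

Definition ebasis (R : realType) (d : nat) (j : 'I_d) : 'rV[R]_d :=
  \row_(i < d) (if i == j then 1 else 0).

Definition B2 (R : realType) (d : nat) : pred 'rV[R]_d :=
  fun y => norm2 y <= 1.

Definition B2o (R : realType) (d : nat) (x : 'rV[R]_d) : pred 'rV[R]_d :=
  fun y => norm2 (y - x) < 1.

(* the centres x^1,...,x^{d+1}, indexed by 'I_(d+1): index j < d gives
   x^{j+1} = (1/(2d)) e^{j+1}; index d gives x^{d+1} = -(1/(2d)) sum_j e^j *)
Definition centre (R : realType) (d : nat) (j : 'I_d.+1) : 'rV[R]_d :=
  match unlift ord_max j with
  | Some j' => (2 * d%:R)^-1 *: ebasis R j'
  | None => - ((2 * d%:R)^-1 *: \sum_(j' < d) ebasis R j')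
  end.

(* If some coordinate of y exceeds half the common length c = 1/(2d) of the
   centres x^1..x^d, then stepping from y towards the corresponding centre
   lowers the squared norm: |y - c e^j|^2 = |y|^2 + c^2 - 2 c y_j < |y|^2.
   Otherwise every coordinate is at most c/2, and we use x^{d+1}:
   |y + c 1|^2 = |y|^2 + 2 c S + c/2 with S the coordinate sum.  When
   S < -1/4 this is again below |y|^2.  When S >= -1/4 the coordinates lie
   below c/2 with total deficit P = 1/4 - S <= 1/2, which forces
   |y|^2 <= c/8 + P^2, and the bound becomes an elementary inequality. *)
From mathcomp Require Import all_boot all_order all_algebra.
From mathcomp Require Import reals.
From mathcomp Require Import ring lra.
Import Order.TTheory GRing.Theory Num.Theory.
Set Implicit Arguments. Unset Strict Implicit. Unset Printing Implicit Defensive.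
Local Open Scope ring_scope.

Section SumOfSquares.
Variables (R : realDomainType) (I : finType).

Lemma sum_sqr_le_sqr_sum (t : I -> R) :
  (forall i, 0 <= t i) -> \sum_i t i ^+ 2 <= (\sum_i t i) ^+ 2.
Proof.
move=> t_ge0; rewrite [X in _ <= X]expr2 mulr_suml; apply: ler_sum => i _.
rewrite expr2 ler_wpM2l // (bigD1 i) //= lerDl.
by apply: sumr_ge0 => j _.
Qed.

(* Writing u i = a - t i with t i >= 0, the cross terms -2 a t i are dropped. *)
Lemma sum_sqr_le_of_ub (a : R) (u : I -> R) :
  0 <= a -> (forall i, u i <= a) ->
  \sum_i u i ^+ 2 <= #|I|%:R * a ^+ 2 + (#|I|%:R * a - \sum_i u i) ^+ 2.
Proof.
move=> a_ge0 u_le_a; set t := fun i => a - u i.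
have t_ge0 i : 0 <= t i by rewrite subr_ge0.
have sum_t : \sum_i t i = #|I|%:R * a - \sum_i u i.
  by rewrite sumrB sumr_const mulr_natl.
rewrite -sum_t (le_trans _ (lerD (lexx _) (sum_sqr_le_sqr_sum t_ge0))) //.
rewrite [_%:R * _]mulr_natl -sumr_const -big_split /=.
apply: ler_sum => i _; have := t_ge0 i; rewrite /t; nra.
Qed.

End SumOfSquares.

Section UnitBall.
Variables (R : realType) (d : nat).
Implicit Types (x y : 'rV[R]_d) (c : R).

Local Notation sqnorm x := (\sum_(i < d) x 0 i ^+ 2).

Lemma B2E y : B2 y = (sqnorm y <= 1).
Proof. by rewrite /B2 /norm2 -{1}sqrtr1 ler_sqrt. Qed.

Lemma B2oE x y : B2o x y = (sqnorm (y - x) < 1).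
Proof. by rewrite /B2o /norm2 -{1}sqrtr1 ltr_sqrt. Qed.

Lemma sqnorm_sub_scale_ebasis c y (j : 'I_d) :
  sqnorm (y - c *: ebasis R j) = sqnorm y + (c ^+ 2 - 2 * c * y 0 j).
Proof.
rewrite (eq_bigr (fun i => y 0 i ^+ 2 +
  (if i == j then c ^+ 2 - 2 * c * y 0 i else 0))).
  by rewrite big_split /= -big_mkcond big_pred1_eq.
by move=> i _; rewrite !mxE; case: eqP => [->|_]; ring.
Qed.

Lemma sqnorm_add_scale_ones c y :
  sqnorm (y + c *: \sum_(j < d) ebasis R j)
  = sqnorm y + 2 * c * \sum_(i < d) y 0 i + d%:R * c ^+ 2.
Proof.
have ones i : (\sum_(j < d) ebasis R j) 0 i = 1.
  rewrite summxE (bigD1 i) //= big1 => [|j ji]; rewrite mxE ?eqxx ?addr0 //.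
  by rewrite eq_sym (negPf ji).
under eq_bigr => i _ do rewrite !mxE ones mulr1 sqrrD.
by rewrite !big_split /= -mulr_suml sumr_const card_ord -mulr_natl; ring.
Qed.

Lemma B2o_scale_ebasis c y (j : 'I_d) :
  0 < c -> c / 2 < y 0 j -> B2 y -> B2o (c *: ebasis R j) y.
Proof. by move=> c_gt0 y_j; rewrite B2E B2oE sqnorm_sub_scale_ebasis; nra. Qed.

Lemma B2o_neg_scale_ones c y :
  (0 < d)%N -> d%:R * c = 1 / 2 -> (forall i, y 0 i <= c / 2) -> B2 y ->
  B2o (- (c *: \sum_(j < d) ebasis R j)) y.
Proof.
move=> d_gt0 dc y_le; rewrite B2E B2oE opprK sqnorm_add_scale_ones.
have d_ge1 : 1 <= d%:R :> R by rewrite ler1n.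
have c_gt0 : 0 < c by nra.
have dc2 : d%:R * c ^+ 2 = c / 2 by rewrite expr2 mulrA dc; field.
set S := \sum_(i < d) y 0 i; rewrite dc2 => y_in.
have [S_lt|S_ge] := ltrP S (- (1 / 4)); first by nra.
have c2_ge0 : 0 <= c / 2 by lra.
have dc4 : d%:R * (c / 2) = 1 / 4 by rewrite mulrA dc; field.
have dc8 : d%:R * (c / 2) ^+ 2 = c / 8 by rewrite expr2 mulrA dc4; field.
have S_le : S <= 1 / 4.
  rewrite (le_trans (ler_sum _ (fun i _ => y_le i))) //.
  by rewrite sumr_const card_ord -dc4 mulr_natl.
have c_le : c <= 1 / 2 by nra.
have := sum_sqr_le_of_ub c2_ge0 y_le.
rewrite cardT size_enum_ord -/S dc4 dc8; nra.
Qed.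

End UnitBall.

Theorem proposition3p1 (R : realType) (d : nat) (hd : (1 <= d)%N)
  (y : 'rV[R]_d) :
  B2 y -> exists j : 'I_d.+1, B2o (centre R j) y.
Proof.
move=> y_in; set c : R := (2 * d%:R)^-1.
have d_gt0 : 0 < d%:R :> R by rewrite ltr0n.
have c_gt0 : 0 < c by rewrite invr_gt0 mulr_gt0.
have dc : d%:R * c = 1 / 2 by rewrite /c; field; rewrite gt_eqF.
have [/existsP [j y_j] | /existsPn y_le] := boolP [exists j : 'I_d, c / 2 < y 0 j].
  by exists (lift ord_max j); rewrite /centre liftK; exact: B2o_scale_ebasis.
exists ord_max; rewrite /centre unlift_none; apply: B2o_neg_scale_ones => // i.
by rewrite leNgt y_le.
Qed.
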